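(* Let $G$ be a topological group and $\pi\colon G\times X\to X$ a continuous action of $G$ on a non-archimedean uniform space $(X,\mathcal U)$ such that the action is $\pi$-uniform. Then the induced action by automorphisms $\overline\pi\colon G\times B_{NA}(X,\mathcal U)\to B_{NA}(X,\mathcal U)$, $(g,u)\mapsto gu$ (determined by $g\cdot i(x)=i(gx)$), is continuous, and the universal map $i\colon (X,\mathcal U)\to B_{NA}(X,\mathcal U)$ is a $G$-equivariant uniform embedding. In particular, $(X,\mathcal U)$ is uniformly $G$-automorphizable in $\mathbf{NA}$.
   Context: All spaces and groups are Hausdorff. A uniform space is non-archimedean if its uniformity has a base of equivalence relations; a topological group is non-archimedean ($\mathbf{NA}$) if it has a local base at the identity of open subgroups. $B_{NA}(X,\mathcal U)$ is the free Boolean non-archimedean group of $(X,\mathcal U)$: a Boolean (every non-identity element of order 2) $\mathbf{NA}$ group with a uniformly continuous map $i\colon X\to B_{NA}$ (two-sided uniformity) such that every uniformly continuous map from $X$ into a Boolean $\mathbf{NA}$ group factors uniquely as a continuous homomorphism composed with $i$; algebraically it is the free Boolean group on $X$. An action $\pi$ on $(X,\mathcal U)$ is $\pi$-uniform if for every $\varepsilon\in\mathcal U$ and $g_0\in G$ there exist $\delta\in\mathcal U$ and a neighborhood $O$ of $g_0$ with $(gx,gy)\in\varepsilon$ for all $(x,y)\in\delta$, $g\in O$. A uniform $G$-space is uniformly $G$-automorphizable in $\mathbf{NA}$ if it is a uniform $G$-subspace (with the two-sided uniformity) of some $\mathbf{NA}$ topological group on which $G$ acts continuously by automorphisms. *)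

From HB Require Import structures.
From mathcomp Require Import all_boot all_order all_algebra.
From mathcomp Require Import monoid.
From mathcomp Require Import all_classical all_reals all_analysis.

Set Implicit Arguments.
Unset Strict Implicit.
Unset Printing Implicit Defensive.

Import GRing.Theory Num.Theory.
Local Open Scope classical_set_scope.
Local Open Scope ring_scope.

HB.structure Definition TopGroupCarrier :=
  {G of Topological G & Group G}.
Notation topGroupType := TopGroupCarrier.type.

Definition is_topological_group (G : topGroupType) : Prop :=
  continuous (fun p : G * G => (p.1 * p.2)%g) /\
  continuous (fun g : G => (g^-1)%g).

Definition is_action (G : groupType) (X : Type) (pi : G -> X -> X) : Prop :=
  (forall x, pi 1%g x = x) /\
  (forall g h x, pi (g * h)%g x = pi g (pi h x)).

Definition is_equivalence_set (X : Type) (F : set (X * X)) : Prop :=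
  [/\ (forall x, F (x, x)),
      (forall x y, F (x, y) -> F (y, x)) &
      (forall x y z, F (x, y) -> F (y, z) -> F (x, z))].

Definition nonarchimedean_uniform (X : uniformType) : Prop :=
  forall E : set (X * X), entourage E ->
    exists F : set (X * X), [/\ entourage F, is_equivalence_set F & F `<=` E].

Definition pi_uniform (G : topologicalType) (X : uniformType)
    (pi : G -> X -> X) : Prop :=
  forall (E : set (X * X)) (g0 : G), entourage E ->
    exists D : set (X * X), exists O : set G,
      [/\ entourage D, nbhs g0 O &
          forall g x y, O g -> D (x, y) -> E (pi g x, pi g y)].

Definition NA_group (P : topGroupType) : Prop :=
  forall V : set P, nbhs (1%g : P) V ->
    exists H : set P,
      [/\ open H, H 1%g, (forall a b, H a -> H b -> H (a * b^-1)%g) & H `<=` V].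

(* j : X -> P is a uniform embedding of X into P equipped with its
   two-sided uniformity (base: {(a,b) | a^-1 b \in V and b a^-1 \in V},
   V a neighbourhood of 1). *)
Definition two_sided_uniform_embedding (X : uniformType) (P : topGroupType)
    (j : X -> P) : Prop :=
  [/\ injective j,
      (forall V : set P, nbhs (1%g : P) V ->
         exists E : set (X * X), entourage E /\
           forall x y, E (x, y) -> V ((j x)^-1 * j y)%g /\ V (j y * (j x)^-1)%g) &
      (forall E : set (X * X), entourage E ->
         exists V : set P, nbhs (1%g : P) V /\
           forall x y, V ((j x)^-1 * j y)%g -> V (j y * (j x)^-1)%g -> E (x, y))].

Definition unif_G_automorphizable_NA (G : topGroupType) (X : uniformType)
    (pi : G -> X -> X) : Prop :=
  exists (P : topGroupType) (rho : G -> P -> P) (j : X -> P),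
    [/\ [/\ is_topological_group P, hausdorff_space P & NA_group P],
        (is_action rho /\
          (forall g a b, rho g (a * b)%g = (rho g a * rho g b)%g)),
        continuous (fun q : G * P => rho q.1 q.2),
        two_sided_uniform_embedding j &
        (forall g x, j (pi g x) = rho g (j x))].

(* Boolean NA groups (abelian, written additively as topologicalZmodType;
   for abelian groups the left, right and two-sided uniformities coincide,
   with base {(a,b) | b - a \in V}, V a neighbourhood of 0). *)

Definition boolean_group (B : zmodType) : Prop := forall b : B, b + b = 0.

Definition NA_zmod (B : topologicalZmodType) : Prop :=
  forall V : set B, nbhs (0 : B) V ->
    exists H : set B,
      [/\ open H, H 0, (forall a b, H a -> H b -> H (a - b)) & H `<=` V].

Definition unif_cont_zmod (X : uniformType) (B : topologicalZmodType)
    (f : X -> B) : Prop :=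
  forall V : set B, nbhs (0 : B) V ->
    exists E : set (X * X), entourage E /\ forall x y, E (x, y) -> V (f y - f x).

Definition uniform_embedding_zmod (X : uniformType) (B : topologicalZmodType)
    (f : X -> B) : Prop :=
  [/\ injective f, unif_cont_zmod f &
      forall E : set (X * X), entourage E ->
        exists V : set B, nbhs (0 : B) V /\ forall x y, V (f y - f x) -> E (x, y)].

Definition is_free_boolean_NA (X : uniformType) (B : topologicalZmodType)
    (i : X -> B) : Prop :=
  [/\ hausdorff_space B, boolean_group B, NA_zmod B, unif_cont_zmod i &
      forall H : topologicalZmodType,
        hausdorff_space H -> boolean_group H -> NA_zmod H ->
        forall f : X -> H, unif_cont_zmod f ->
          exists! phi : B -> H,
            [/\ (forall a b, phi (a + b) = phi a + phi b),
                continuous phi &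
                forall x, phi (i x) = f x]].

From HB Require Import structures.
From mathcomp Require Import all_boot all_order all_algebra.
From mathcomp Require Import monoid.
From mathcomp Require Import all_classical all_reals all_analysis.

Set Implicit Arguments.
Unset Strict Implicit.
Unset Printing Implicit Defensive.

Import GRing.Theory Num.Theory.
Local Open Scope classical_set_scope.
Local Open Scope ring_scope.

(* Each g acts uniformly on X, so i \o pi g extends to a continuous
   endomorphism pibar g of B, and uniqueness of extensions makes pibar an
   action. The universal property is tested against discrete quotients B / S:
   they are Hausdorff Boolean NA groups, and B -> B / S is continuous when S is
   an open subgroup. This shows that every subgroup containing i(X) is dense
   and, together with pi-uniformity, that the pibar g are equicontinuous at 0
   locally in g; joint continuity then follows by telescoping through a point
   of a suitable dense subgroup. Maps X -> Z/2 that are constant on the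
   classes of an equivalence entourage show that i is a uniform embedding. *)

Definition is_subgroup (B : zmodType) (S : set B) : Prop :=
  S 0 /\ forall a b, S a -> S b -> S (a - b).

Section Subgroup.
Variables (B : zmodType) (S : set B).
Hypothesis S_subgroup : is_subgroup S.

Lemma subgroupN a : S a -> S (- a).
Proof. by move=> Sa; rewrite -sub0r; apply: S_subgroup.2 => //; exact: S_subgroup.1. Qed.

Lemma subgroupD a b : S a -> S b -> S (a + b).
Proof. by move=> Sa Sb; rewrite -[b]opprK; apply: S_subgroup.2 => //; exact: subgroupN. Qed.

End Subgroup.

Lemma subrBB (M : zmodType) (a b c d : M) : (a - b) - (c - d) = (a - c) - (b - d).
Proof. by rewrite !opprB addrACA [RHS]addrACA [- c - b]addrC. Qed.

Lemma Z2_addxx (x : 'Z_2) : x + x = 0.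
Proof. by case: x => -[|[|m]] // Hm; apply: val_inj. Qed.

Section AdditiveMap.
Variables (B H : zmodType) (f : B -> H).
Hypothesis f_add : {morph f : a b / a + b}.

Lemma additive_map0 : f 0 = 0.
Proof. by apply: (addrI (f 0)); rewrite -f_add !addr0. Qed.

Lemma additive_mapB a b : f (a - b) = f a - f b.
Proof.
suff fN : f (- b) = - f b by rewrite f_add fN.
by apply/eqP; rewrite -addr_eq0 -f_add addNr additive_map0.
Qed.

Lemma additive_kernel_subgroup : is_subgroup [set b | f b = 0].
Proof.
split=> [|a b /= fa fb]; first exact: additive_map0.
by rewrite additive_mapB fa fb subrr.
Qed.

End AdditiveMap.

(* B / S, with each coset represented by a chosen element of it. *)
Section CosetQuotient.
Variables (B : zmodType) (S : set B).
Hypothesis S_subgroup : is_subgroup S.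

Definition coset_repr (b : B) : B := xget 0 [set c | S (c - b)].

Lemma coset_reprB b : S (coset_repr b - b).
Proof.
apply: (@xgetPex _ 0 [set c | S (c - b)]); exists b => /=.
by rewrite subrr; exact: S_subgroup.1.
Qed.

Lemma coset_repr_eq a b : coset_repr a = coset_repr b <-> S (a - b).
Proof.
split=> [e|Sab].
  have -> : a - b = (coset_repr b - b) - (coset_repr a - a).
    by rewrite e [RHS]addrC opprB addrA subrK.
  by apply: S_subgroup.2; exact: coset_reprB.
rewrite /coset_repr; congr xget; apply/seteqP; split => c /= Sc.
  by rewrite -(subrKA a); exact: subgroupD.
by rewrite -(subrKA b) -[b - a]opprB; apply: S_subgroup.2.
Qed.

Lemma coset_repr_idem b : coset_repr (coset_repr b) = coset_repr b.
Proof. exact/coset_repr_eq/coset_reprB. Qed.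

(* The dummy argument lets the instances below, which need S_subgroup, be
   found from the type. *)
Definition zquot_of (_ : is_subgroup S) := {b : B | coset_repr b == b}.
Definition zquot := zquot_of S_subgroup.
HB.instance Definition _ := Choice.copy zquot {b : B | coset_repr b == b}.

Definition zproj (b : B) : zquot := exist _ (coset_repr b) (introT eqP (coset_repr_idem b)).

Lemma zproj_eq a b : zproj a = zproj b <-> S (a - b).
Proof.
rewrite -coset_repr_eq; split=> [/(congr1 val)//|e].
exact: val_inj.
Qed.

Lemma zproj_val (x : zquot) : zproj (val x) = x.
Proof. by apply: val_inj => /=; apply/eqP; case: x. Qed.

Lemma zquot_ind (P : zquot -> Prop) : (forall b, P (zproj b)) -> forall x, P x.
Proof. by move=> h x; rewrite -(zproj_val x). Qed.

Definition zquot_add (x y : zquot) := zproj (val x + val y).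
Definition zquot_opp (x : zquot) := zproj (- val x).

Lemma zquot_addE a b : zquot_add (zproj a) (zproj b) = zproj (a + b).
Proof.
apply/zproj_eq; rewrite opprD addrACA.
by apply: subgroupD => //; exact: coset_reprB.
Qed.

Lemma zquot_oppE a : zquot_opp (zproj a) = zproj (- a).
Proof.
apply/zproj_eq; rewrite -opprD.
by apply: subgroupN => //; exact: coset_reprB.
Qed.

Lemma zquot_addA : associative zquot_add.
Proof.
by elim/zquot_ind=> a; elim/zquot_ind=> b; elim/zquot_ind=> c; rewrite !zquot_addE addrA.
Qed.

Lemma zquot_addC : commutative zquot_add.
Proof. by elim/zquot_ind=> a; elim/zquot_ind=> b; rewrite !zquot_addE addrC. Qed.

Lemma zquot_add0 : left_id (zproj 0) zquot_add.
Proof. by elim/zquot_ind=> a; rewrite zquot_addE add0r. Qed.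

Lemma zquot_addN : left_inverse (zproj 0) zquot_opp zquot_add.
Proof. by elim/zquot_ind=> a; rewrite zquot_oppE zquot_addE addNr. Qed.

HB.instance Definition _ :=
  GRing.isZmodule.Build zquot zquot_addA zquot_addC zquot_add0 zquot_addN.

Lemma zprojD : {morph zproj : a b / a + b}.
Proof. by move=> a b; rewrite -zquot_addE. Qed.

Lemma zproj_eq0 a : zproj a = 0 <-> S a.
Proof. by rewrite -[0]/(zproj 0) zproj_eq subr0. Qed.

End CosetQuotient.

Section QuotientMap.
Variables (B1 B2 : zmodType) (N : set B1) (U : set B2) (h : B1 -> B2).
Hypotheses (N_subgroup : is_subgroup N) (U_subgroup : is_subgroup U).
Hypotheses (h_add : {morph h : a b / a + b}) (h_NU : forall b, N b -> U (h b)).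

Definition zquot_map (x : zquot N_subgroup) : zquot U_subgroup :=
  zproj U_subgroup (h (val x)).

Lemma zquot_mapE b : zquot_map (zproj N_subgroup b) = zproj U_subgroup (h b).
Proof.
by apply/zproj_eq; rewrite -(additive_mapB h_add); apply: h_NU; exact: coset_reprB.
Qed.

Lemma zquot_mapD : {morph zquot_map : x y / x + y}.
Proof.
elim/zquot_ind => a; elim/zquot_ind => b.
by rewrite -zprojD !zquot_mapE h_add zprojD.
Qed.

End QuotientMap.

HB.instance Definition _ (T : zmodType) :=
  GRing.Zmodule.copy (discrete_topology T) T.

Lemma discrete_continuous (T : choiceType) (Y : topologicalType)
  (f : discrete_topology T -> Y) : continuous f.
Proof.
by move=> x A /= Ax; apply/principal_filterP => /=; exact: nbhs_singleton.
Qed.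

Lemma discrete_continuous2 (T : choiceType) (Y : topologicalType)
  (f : discrete_topology T * discrete_topology T -> Y) : continuous f.
Proof.
move=> [p q] A /= Afpq; exists ([set p], [set q]).
  by split; apply: discrete_set1.
by case=> a b [/= -> ->]; exact: nbhs_singleton.
Qed.

HB.instance Definition _ (T : zmodType) :=
  PreTopologicalNmodule_isTopologicalZmodule.Build (discrete_topology T)
    (@discrete_continuous2 T _ (fun x => x.1 - x.2)).

Lemma discrete_NA_zmod (T : zmodType) : NA_zmod (discrete_topology T).
Proof.
move=> V V0; exists [set 0]; split=> [||a b /= -> ->|a /= ->] //.
- exact: discrete_open.
- by rewrite subrr.
- exact: nbhs_singleton.
Qed.

Section TopologicalZmodule.
Variable B : topologicalZmodType.

Lemma addr_continuous (c : B) : continuous (fun u : B => c + u).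
Proof.
move=> u; apply: (@continuous_comp _ _ _ (fun u => (c, u)) (fun x : B * B => x.1 + x.2)).
  by apply: cvg_pair; [exact: cvg_cst | exact: cvg_id].
exact: add_continuous.
Qed.

Lemma nbhs_shift0 (c : B) (V : set B) : nbhs c V -> nbhs 0 [set u | V (c + u)].
Proof. by move=> Vc; have := @addr_continuous c 0; rewrite /continuous_at addr0; apply. Qed.

Lemma nbhs0_shift (b : B) (V : set B) : nbhs 0 V -> nbhs b [set c | V (c - b)].
Proof.
move=> V0; have := @addr_continuous (- b) b.
rewrite /continuous_at addNr => /(_ _ V0).
by apply: (filterS (P := [set c | V (- b + c)])) => c; rewrite /= addrC.
Qed.

Lemma additive_nbhs0 (H : topologicalZmodType) (f : B -> H) (V : set H) :
  {morph f : a b / a + b} -> continuous f -> nbhs 0 V -> nbhs 0 (f @^-1` V).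
Proof.
move=> f_add f_cont V0; have := f_cont 0.
by rewrite /continuous_at (additive_map0 f_add) => /(_ _ V0).
Qed.

Lemma additive_kernel_nbhs0 (T : zmodType) (f : B -> discrete_topology T) :
  {morph f : a b / a + b} -> continuous f -> nbhs 0 [set b | f b = 0].
Proof.
by move=> f_add f_cont; exact: additive_nbhs0 (discrete_set1 (0 : discrete_topology T)).
Qed.

End TopologicalZmodule.

Section DiscreteQuotient.
Variables (B : topologicalZmodType) (S : set B).
Hypothesis S_subgroup : is_subgroup S.

Definition dquot := discrete_topology (zquot S_subgroup).

Definition dproj (b : B) : dquot := zproj S_subgroup b.

Lemma dquot_boolean : boolean_group B -> boolean_group dquot.
Proof. by move=> Bbool; elim/zquot_ind => b; rewrite -zprojD Bbool. Qed.

Lemma dproj_continuous : nbhs 0 S -> continuous dproj.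
Proof.
move=> S0 b; apply/discrete_cvg => /=.
by apply: filterS (nbhs0_shift b S0) => c /= Scb; apply/zproj_eq.
Qed.

End DiscreteQuotient.

Section FreeBooleanNA.
Variables (X : uniformType) (B : topologicalZmodType) (i : X -> B).
Hypothesis i_free : is_free_boolean_NA i.

Let B_hausdorff : hausdorff_space B. Proof. by case: i_free. Qed.
Let B_boolean : boolean_group B. Proof. by case: i_free. Qed.
Let B_NA : NA_zmod B. Proof. by case: i_free. Qed.
Let i_unif_cont : unif_cont_zmod i. Proof. by case: i_free. Qed.

Lemma free_extension (H : topologicalZmodType) (f : X -> H) :
  hausdorff_space H -> boolean_group H -> NA_zmod H -> unif_cont_zmod f ->
  exists phi : B -> H,
    [/\ {morph phi : a b / a + b}, continuous phi & forall x, phi (i x) = f x].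
Proof.
move=> Hh Hb Hna f_uc; case: i_free => _ _ _ _ /(_ H Hh Hb Hna f f_uc).
by case=> phi [[phi_add phi_cont phi_i] _]; exists phi.
Qed.

Lemma additive_unif_cont (H : topologicalZmodType) (phi : B -> H) :
  {morph phi : a b / a + b} -> continuous phi -> unif_cont_zmod (phi \o i).
Proof.
move=> phi_add phi_cont V /(additive_nbhs0 phi_add phi_cont) /i_unif_cont [E [HE EV]].
by exists E; split=> // x y /EV /=; rewrite additive_mapB.
Qed.

Lemma free_hom_eq (H : topologicalZmodType) (phi1 phi2 : B -> H) :
  hausdorff_space H -> boolean_group H -> NA_zmod H ->
  {morph phi1 : a b / a + b} -> continuous phi1 ->
  {morph phi2 : a b / a + b} -> continuous phi2 ->
  (forall x, phi1 (i x) = phi2 (i x)) -> phi1 = phi2.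
Proof.
move=> Hh Hb Hna add1 cont1 add2 cont2 e12.
case: i_free => _ _ _ _ /(_ H Hh Hb Hna _ (additive_unif_cont add1 cont1)) [phi [_ uniq]].
by rewrite -(uniq phi1) ?(uniq phi2) //; split=> // x; rewrite /= e12.
Qed.

Lemma free_continuous : continuous i.
Proof.
move=> x V /= /nbhs_shift0 /i_unif_cont [E [HE EV]].
apply: filterS (nbhs_entourage x HE) => y /xsectionP /EV /=.
by rewrite addrC subrK.
Qed.

(* T + W is an open subgroup containing i(X), so the quotient map onto the
   discrete group B / (T + W) vanishes on i(X) and hence everywhere. *)
Lemma free_subgroup_dense (T W : set B) :
  is_subgroup T -> (forall x, T (i x)) -> is_subgroup W -> nbhs 0 W ->
  forall b, exists2 s, T s & W (b - s).
Proof.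
move=> T_sub Ti W_sub W0 b.
pose TW := [set c | exists2 s, T s & W (c - s)].
have TW_sub : is_subgroup TW.
  split; first by exists 0; [exact: T_sub.1 | rewrite subrr; exact: W_sub.1].
  move=> a c [s1 T1 W1] [s2 T2 W2]; exists (s1 - s2); first exact: T_sub.2.
  by rewrite subrBB; apply: W_sub.2.
have TW0 : nbhs 0 TW.
  by apply: filterS W0 => c Wc; exists 0; [exact: T_sub.1 | rewrite subr0].
have proj0 : dproj TW_sub = (fun _ => 0).
  apply: (free_hom_eq (H := dquot TW_sub) discrete_hausdorff (dquot_boolean B_boolean)
    (@discrete_NA_zmod _) (zprojD TW_sub) (dproj_continuous TW0) _ _ _).
  - by move=> u v; rewrite addr0.
  - by move=> u; exact: cvg_cst.
  - move=> x; apply/zproj_eq0; exists (i x) => //.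
    by rewrite subrr; exact: W_sub.1.
by have /zproj_eq0 := congr1 (fun f => f b) proj0.
Qed.

(* The indicator of the F-class of x, F an equivalence entourage, is a
   uniformly continuous map into a discrete Boolean group separating F. *)
Lemma free_separating : nonarchimedean_uniform X -> forall E, entourage E ->
  exists2 V : set B, nbhs 0 V & forall x y, V (i y - i x) -> E (x, y).
Proof.
move=> X_NA E HE; have [F [HF [Frefl Fsym Ftrans] FE]] := X_NA E HE.
pose f x : discrete_topology (X -> 'Z_2) := fun z => if `[< F (x, z) >] then 1 else 0.
have fE x y : F (x, y) -> f x = f y.
  move=> Fxy; apply/funext => z; rewrite /f.
  suff -> : `[< F (x, z) >] = `[< F (y, z) >] by [].
  by apply/asbool_equiv_eq; split=> [/(Ftrans _ _ _ (Fsym _ _ Fxy))|/(Ftrans _ _ _ Fxy)].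
have f_uc : unif_cont_zmod f.
  move=> V V0; exists F; split=> // x y /fE ->.
  by rewrite subrr; exact: nbhs_singleton.
have f_bool : boolean_group (discrete_topology (X -> 'Z_2)).
  by move=> h; apply/funext => z; exact: Z2_addxx.
have [phi [phi_add phi_cont phi_i]] :=
  free_extension (H := discrete_topology _) discrete_hausdorff f_bool
    (@discrete_NA_zmod (X -> 'Z_2)) f_uc.
exists [set b | phi b = 0]; first exact: additive_kernel_nbhs0.
move=> x y /=; rewrite (additive_mapB phi_add) !phi_i => /subr0_eq /(congr1 (fun h => h y)).
by rewrite /f asboolT //; case: asboolP => [/FE|].
Qed.

Lemma free_injective : hausdorff_space X -> nonarchimedean_uniform X -> injective i.
Proof.
move=> X_hausdorff X_NA x y ixy; apply: X_hausdorff => A C /nbhsP [E HE EA] Cy.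
have [V V0 VE] := free_separating X_NA HE.
exists y; split; last exact: nbhs_singleton Cy.
by apply/EA/xsectionP/VE; rewrite ixy subrr; exact: nbhs_singleton V0.
Qed.

Section InducedAction.
Variables (G : topGroupType) (pi : G -> X -> X).
Hypotheses (pi_action : is_action pi) (pi_unif : pi_uniform pi).
Hypothesis pi_cont : continuous (fun q : G * X => pi q.1 q.2).

Lemma translation_extension g : exists phi : B -> B,
  [/\ {morph phi : a b / a + b}, continuous phi & forall x, phi (i x) = i (pi g x)].
Proof.
apply: (free_extension (H := B)) => // V /i_unif_cont [E [HE EV]].
have [D [Og [HD Og_g DE]]] := pi_unif g HE.
by exists D; split=> // x y /(DE g x y (nbhs_singleton Og_g)) /EV.
Qed.

Definition pibar : G -> B -> B := projT1 (choice translation_extension).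

Lemma pibarP g : [/\ {morph pibar g : a b / a + b}, continuous (pibar g)
  & forall x, pibar g (i x) = i (pi g x)].
Proof. exact: (projT2 (choice translation_extension) g). Qed.

Lemma pibarD g : {morph pibar g : a b / a + b}. Proof. by case: (pibarP g). Qed.
Lemma pibar_continuous g : continuous (pibar g). Proof. by case: (pibarP g). Qed.
Lemma pibar_i g x : pibar g (i x) = i (pi g x). Proof. by case: (pibarP g). Qed.
Lemma pibarB g a b : pibar g (a - b) = pibar g a - pibar g b.
Proof. exact: (additive_mapB (pibarD g)). Qed.
Lemma pibar0 g : pibar g 0 = 0. Proof. exact: (additive_map0 (pibarD g)). Qed.

Lemma pibar_action : is_action pibar.
Proof.
have [pi1 piM] := pi_action; split=> [b|g h b].
  suff -> : pibar 1%g = id by [].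
  apply: (free_hom_eq B_hausdorff B_boolean B_NA (pibarD _) (@pibar_continuous 1%g)
    _ _ _) => //.
  - by move=> u; exact: cvg_id.
  - by move=> x; rewrite pibar_i pi1.
suff -> : pibar (g * h)%g = pibar g \o pibar h by [].
apply: (free_hom_eq B_hausdorff B_boolean B_NA (pibarD _) (@pibar_continuous (g * h)%g)
  _ _ _).
- by move=> u v; rewrite /= !pibarD.
- by move=> u; apply: continuous_comp; exact: pibar_continuous.
- by move=> x; rewrite /= !pibar_i piM.
Qed.

Lemma orbit_continuous x : continuous (fun g => i (pi g x)).
Proof.
move=> g; apply: continuous_comp; last exact: free_continuous.
apply: (@continuous_comp _ _ _ (fun g => (g, x)) (fun q : G * X => pi q.1 q.2)).
  by apply: cvg_pair; [exact: cvg_id | exact: cvg_cst].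
exact: pi_cont.
Qed.

Definition near_fixed (U : set B) (g0 : G) : set B :=
  [set s | \forall g \near g0, U (pibar g s - pibar g0 s)].

Lemma near_fixed_subgroup U g0 : is_subgroup U -> is_subgroup (near_fixed U g0).
Proof.
move=> U_sub; split.
  by apply: filterE => g; rewrite !pibar0 subrr; exact: U_sub.1.
move=> a c Ua Uc; apply: filterS (filterI Ua Uc) => g [/= Uag Ucg].
by rewrite !pibarB subrBB; apply: U_sub.2.
Qed.

Lemma near_fixed_i U g0 x : nbhs 0 U -> near_fixed U g0 (i x).
Proof.
move=> U0; have := @orbit_continuous x g0 _ (nbhs0_shift (i (pi g0 x)) U0).
by apply: (@filterS _ _ _ [set g | U (i (pi g x) - i (pi g0 x))]) => g; rewrite /= !pibar_i.
Qed.

(* The subgroup N of those b with U (pibar g b) for all g near g0 need not be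
   open, but the extension of i modulo N has an open kernel W, and W lies in N
   because B / N -> B / U, [b] |-> [pibar g b], intertwines the extensions. *)
Lemma pibar_equicontinuous0 (U : set B) (g0 : G) : nbhs 0 U -> is_subgroup U ->
  exists W, [/\ nbhs 0 W, is_subgroup W &
    \forall g \near g0, forall w, W w -> U (pibar g w)].
Proof.
move=> U0 U_sub; have [E [HE EU]] := i_unif_cont U0.
have [D [Og [HD Og_g0 DE]]] := pi_unif g0 HE.
pose N := [set b | forall g, Og g -> U (pibar g b)].
have N_sub : is_subgroup N.
  split=> [g _|a c Na Nc g Ogg]; first by rewrite pibar0; exact: U_sub.1.
  by rewrite pibarB; apply: U_sub.2; [exact: Na | exact: Nc].
have projN_uc : unif_cont_zmod (dproj N_sub \o i).
  move=> V V0; exists D; split=> // x y Dxy.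
  suff -> : dproj N_sub (i y) - dproj N_sub (i x) = 0 by exact: nbhs_singleton.
  rewrite -(additive_mapB (zprojD N_sub)); apply/zproj_eq0 => g Ogg.
  by rewrite pibarB !pibar_i; exact: EU (DE g x y Ogg Dxy).
have [phi [phi_add phi_cont phi_i]] := free_extension (H := dquot N_sub)
  discrete_hausdorff (dquot_boolean B_boolean) (@discrete_NA_zmod _) projN_uc.
exists [set b | phi b = 0]; split.
- exact: additive_kernel_nbhs0.
- exact: additive_kernel_subgroup.
apply: filterS Og_g0 => g Ogg w /= phi_w.
have NU b : N b -> U (pibar g b) by apply.
pose chi : B -> dquot U_sub := zquot_map (N_subgroup := N_sub) (pibar g) U_sub \o phi.
have chiD := zquot_mapD (N_subgroup := N_sub) U_sub (pibarD g) NU.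
have chiE := zquot_mapE N_sub U_sub (pibarD g) NU.
have chi_eq : chi = dproj U_sub \o pibar g.
  apply: (free_hom_eq (H := dquot U_sub) discrete_hausdorff
    (dquot_boolean B_boolean) (@discrete_NA_zmod _) _ _ _ _ _).
  - by move=> a b; rewrite /chi /= phi_add chiD.
  - by move=> b; apply: continuous_comp; [exact: phi_cont | exact: discrete_continuous].
  - by move=> a b; rewrite /= pibarD /dproj zprojD.
  - move=> b; apply: continuous_comp; first exact: pibar_continuous.
    exact: dproj_continuous.
  - by move=> x; rewrite /chi /= phi_i chiE.
apply/(zproj_eq0 U_sub); have -> : zproj U_sub (pibar g w) = chi w by rewrite chi_eq.
by rewrite /chi /= phi_w (additive_map0 chiD).
Qed.

(* pibar g b - pibar g0 b0 telescopes through a point s of the dense subgroup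
   near_fixed U g0 chosen in the W-coset of b0. *)
Lemma pibar_jointly_continuous : continuous (fun q : G * B => pibar q.1 q.2).
Proof.
move=> [g0 b0] V /= /nbhs_shift0 V0.
have [U [U_open U_0 U_subr UV]] := B_NA V0.
have U0 : nbhs 0 U by exact: open_nbhs_nbhs.
have U_sub : is_subgroup U by [].
have [W [W0 W_sub near_WU]] := pibar_equicontinuous0 g0 U0 U_sub.
have [s near_s Wb0s] := free_subgroup_dense (near_fixed_subgroup g0 U_sub)
  (fun x => near_fixed_i g0 x U0) W_sub W0 b0.
exists ([set g | (forall w, W w -> U (pibar g w)) /\ U (pibar g s - pibar g0 s)],
        [set b | W (b - b0)]).
  by split; [exact: filterI near_WU near_s | exact: nbhs0_shift].
case=> g b [/= [WU Us] Wbb0].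
suff : U (pibar g b - pibar g0 b0) by move/UV; rewrite /= addrC subrK.
have -> : pibar g b - pibar g0 b0
    = pibar g (b - s) + (pibar g s - pibar g0 s) + pibar g0 (s - b0).
  by rewrite !pibarB !subrKA.
apply: subgroupD => //; last first.
  have WU0 : forall w, W w -> U (pibar g0 w) := nbhs_singleton near_WU.
  by apply: WU0; rewrite -opprB; exact: subgroupN.
apply: subgroupD => //; apply: WU.
by rewrite -(subrKA b0); exact: subgroupD.
Qed.

End InducedAction.
End FreeBooleanNA.

Definition additive_group (T : topologicalZmodType) : Type := T.
HB.instance Definition _ (T : topologicalZmodType) :=
  Topological.copy (additive_group T) T.
HB.instance Definition _ (T : topologicalZmodType) :=
  isGroup.Build (additive_group T) (@addrA T) (@add0r T) (@addr0 T) (@addNr T) (@subrr T).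

Section AdditiveGroup.
Variable B : topologicalZmodType.

Lemma additive_group_topological : is_topological_group (additive_group B).
Proof. by split; [exact: (@add_continuous B) | exact: (@opp_continuous B)]. Qed.

Lemma additive_group_NA : NA_zmod B -> NA_group (additive_group B).
Proof. by move=> B_NA V /B_NA [H [H_open H0 H_sub HV]]; exists H. Qed.

Lemma additive_group_embedding (X : uniformType) (j : X -> B) :
  uniform_embedding_zmod j -> two_sided_uniform_embedding (j : X -> additive_group B).
Proof.
case=> j_inj j_uc j_sep; split=> // [V /j_uc [E [HE EV]]|E /j_sep [V [V0 VE]]].
  exists E; split=> // x y /EV Vxy; split=> //.
  by change (V (- j x + j y)); rewrite addrC.
by exists V; split=> // x y _ /VE.
Qed.

End AdditiveGroup.

Theorem theorem7p6 (G : topGroupType) (X : uniformType)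
    (pi : G -> X -> X) (B : topologicalZmodType) (i : X -> B) :
  is_topological_group G -> hausdorff_space G ->
  hausdorff_space X -> nonarchimedean_uniform X ->
  is_action pi -> continuous (fun q : G * X => pi q.1 q.2) ->
  pi_uniform pi ->
  is_free_boolean_NA i ->
  (exists pibar : G -> B -> B,
     [/\ is_action pibar,
         (forall g a b, pibar g (a + b) = pibar g a + pibar g b),
         (forall g x, pibar g (i x) = i (pi g x)),
         continuous (fun q : G * B => pibar q.1 q.2) &
         uniform_embedding_zmod i])
  /\ unif_G_automorphizable_NA pi.
Proof.
move=> _ _ X_hausdorff X_NA pi_action pi_cont pi_unif i_free.
have [B_hausdorff _ B_NA i_uc _] := i_free.
have i_emb : uniform_embedding_zmod i.
  split; [exact: free_injective | exact: i_uc |].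
  by move=> E /(free_separating i_free X_NA) [V V0 VE]; exists V.
pose act := pibar i_free pi_unif.
have act_action : is_action act := pibar_action i_free pi_action pi_unif.
have act_cont : continuous (fun q : G * B => act q.1 q.2).
  exact: (pibar_jointly_continuous (i_free := i_free) (pi_unif := pi_unif) pi_cont).
split; first by exists act; split=> //; [exact: pibarD | exact: pibar_i].
exists (additive_group B), act, i; split=> //.
- split; first exact: additive_group_topological.
  + exact: B_hausdorff.
  + exact: additive_group_NA.
- by split=> // g; exact: pibarD.
- exact: additive_group_embedding.
- by move=> g x; rewrite /act pibar_i.
Qed.
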